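(* For all $m,d\ge1$, the polynomial $P_d(x_1,\dots,x_m)$ can be computed by a non-commutative UPT circuit of size $O(m^2d)$.
   Context: Let $T_d$ be the complete binary tree of depth $d$ ($2^d$ leaves, $D=2^{d+1}-1$ nodes), with nodes $v_1,\dots,v_D$ listed in in-order (left subtree recursively, root, right subtree recursively). A colouring $\gamma:T_d\to\mathbb{Z}_m$ is legal if for every internal node $u$ with children $v,w$, $\gamma(u)=\gamma(v)+\gamma(w)\bmod m$. Identify $\mathbb{Z}_m$ with $\{1,\dots,m\}$. $P_d(x_1,\dots,x_m)=\sum_{\gamma\text{ legal}}x_{\gamma(v_1)}\cdots x_{\gamma(v_D)}\in\mathbb{F}\langle x_1,\dots,x_m\rangle$. A non-commutative circuit is a DAG with one output, leaves variables or constants, $+$ gates and $\times$ gates with ordered children; a parse tree keeps all children of $\times$ gates and exactly one child of each $+$ gate; a circuit computing a homogeneous polynomial is UPT if all parse trees have the same shape (ordered rooted tree with $+/\times$ labels, forgetting gate names). *)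

From HB Require Import structures.
From mathcomp Require Import all_boot all_order all_algebra.
From Stdlib Require Lists.List.
Set Implicit Arguments. Unset Strict Implicit. Unset Printing Implicit Defensive.
Import GRing.Theory.
Local Open Scope ring_scope.

(* Non-commutative polynomials in x_1..x_m over F, given by their      *)
(* coefficient function on words (variable x_{j+1} <-> j : 'I_m).      *)
Definition ncpoly (m : nat) (F : fieldType) := seq 'I_m -> F.

Section NCPoly.
Variables (m : nat) (F : fieldType).

Definition nc0 : ncpoly m F := fun _ => 0.
Definition nc1 : ncpoly m F := fun w => if w is [::] then 1 else 0.
Definition ncconst (c : F) : ncpoly m F := fun w => if w is [::] then c else 0.
Definition ncvar (i : 'I_m) : ncpoly m F := fun w => if w == [:: i] then 1 else 0.
Definition ncadd (p q : ncpoly m F) : ncpoly m F := fun w => p w + q w.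
Definition ncmul (p q : ncpoly m F) : ncpoly m F :=
  fun w => \sum_(i < (size w).+1) p (take i w) * q (drop i w).
End NCPoly.

(* The complete binary tree T_d, nodes numbered 0..D-1 in in-order.    *)
(* number of nodes D = 2^(d+1) - 1 *)
Fixpoint tsize (d : nat) : nat := if d is d'.+1 then (tsize d').*2.+1 else 1.
Definition troot (d : nat) : nat := if d is d'.+1 then tsize d' else 0.
(* triples (parent, left child, right child) of internal nodes of T_d,
   in-order indices shifted by off: T_{d+1} = T_d (left), root, T_d (right) *)
Fixpoint tedges (d off : nat) : seq (nat * nat * nat) :=
  if d is d'.+1 then
    (off + tsize d', off + troot d', off + tsize d' + 1 + troot d')
      :: tedges d' off ++ tedges d' (off + tsize d' + 1)
  else [::].

(* A colouring gamma : T_d -> Z_m, given as the sequence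
   (gamma(v_1), ..., gamma(v_D)) of in-order colours; Z_m = 'I_m. *)
Definition legal (m d : nat) (g : (tsize d).-tuple 'I_m) : bool :=
  let s := map val g in
  all (fun e : nat * nat * nat =>
         let: (u, v, w) := e in nth 0%N s u == ((nth 0%N s v + nth 0%N s w) %% m)%N)
      (tedges d 0).

(* Z_m identified with {1,..,m} (residue 0 <-> m, residue c <-> c); colour
   c thus gives variable x_c, whose index (in 'I_m, shifted by one) is: *)
Definition colvar (m c : nat) : nat := if c == 0%N then m.-1 else c.-1.

(* P_d = sum over legal gamma of x_{gamma(v_1)} ... x_{gamma(v_D)}:
   coefficient of the word w = number of legal gamma producing w. *)
Definition Pd (F : fieldType) (m d : nat) : ncpoly m F :=
  fun w => (#|[set g : (tsize d).-tuple 'I_m |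
                 legal g && (map (colvar m) (map val g) == map val w)]|)%:R.

(* Non-commutative circuits: a list of gates in topological order;     *)
(* children are referred to by their (strictly smaller) position;      *)
Inductive gate (m : nat) (F : Type) :=
| GVar of 'I_m
| GConst of F
| GAdd of seq nat
| GMul of seq nat.

Arguments GVar {m F}. Arguments GConst {m F}. Arguments GAdd {m F}. Arguments GMul {m F}.

Definition children (m : nat) (F : Type) (g : gate m F) : seq nat :=
  match g with GAdd cs | GMul cs => cs | _ => [::] end.

Definition wf_circuit (m : nat) (F : Type) (C : seq (gate m F)) : Prop :=
  C <> [::] /\
  forall k, (k < size C)%N ->
    forall j, j \in children (nth (GAdd [::]) C k) -> (j < k)%N.

Definition csize (m : nat) (F : Type) (C : seq (gate m F)) : nat :=
  (size C + sumn (map (fun g => size (children g)) C))%N.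

Section Eval.
Variables (m : nat) (F : fieldType).

Definition eval_gate (vs : seq (ncpoly m F)) (g : gate m F) : ncpoly m F :=
  match g with
  | GVar i => @ncvar m F i
  | GConst c => @ncconst m F c
  | GAdd cs => foldr (@ncadd m F) (@nc0 m F) [seq nth (@nc0 m F) vs j | j <- cs]
  | GMul cs => foldr (@ncmul m F) (@nc1 m F) [seq nth (@nc0 m F) vs j | j <- cs]
  end.

Definition evals (C : seq (gate m F)) : seq (ncpoly m F) :=
  foldl (fun vs g => rcons vs (eval_gate vs g)) [::] C.

Definition output (C : seq (gate m F)) : ncpoly m F := last (@nc0 m F) (evals C).
End Eval.

(* Shapes of parse trees: ordered rooted trees with +/x labels on      *)
(* internal nodes (leaves unlabelled, gate names forgotten).           *)
Inductive shape :=
| SLeaf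
| SAdd of shape          (* a + gate keeps exactly one child *)
| SMul of seq shape.     (* a x gate keeps all its children, in order *)

Definition choices (A : Type) (Ss : seq (seq A)) : seq (seq A) :=
  foldr (fun S acc => flatten [seq [seq s :: t | t <- acc] | s <- S]) [:: [::]] Ss.

Section Shapes.
Variables (m : nat) (F : Type).

Definition shapes_gate (ss : seq (seq shape)) (g : gate m F) : seq shape :=
  match g with
  | GVar _ | GConst _ => [:: SLeaf]
  | GAdd cs => flatten [seq [seq SAdd s | s <- nth [::] ss j] | j <- cs]
  | GMul cs => [seq SMul l | l <- choices [seq nth [::] ss j | j <- cs]]
  end.

Definition all_shapes (C : seq (gate m F)) : seq (seq shape) :=
  foldl (fun ss g => rcons ss (shapes_gate ss g)) [::] C.

Definition parse_shapes (C : seq (gate m F)) : seq shape := last [::] (all_shapes C).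

Definition UPT (C : seq (gate m F)) : Prop :=
  forall s t, Stdlib.Lists.List.In s (parse_shapes C) -> Stdlib.Lists.List.In t (parse_shapes C) -> s = t.
End Shapes.

(* For a colour c, let Q_k(c) be the sum of the words of the legal colourings of T_k
   whose root is coloured c.  Splitting T_(k+1) into root and two copies of T_k gives
   Q_(k+1)(c) = sum_a Q_k(a) x_c Q_k(c - a), and P_d = sum_c Q_d(c).  Computing all
   the Q_k(c) level by level takes m^2 products of fan-in 3 and m sums of fan-in m per
   level, i.e. O(m^2) gates and wires.  Every parse tree rooted at Q_k(c) has shape
   s_k, where s_0 is a leaf and s_(k+1) = +(x(s_k, leaf, s_k)), so the circuit is UPT. *)

From mathcomp Require Import all_boot all_order all_algebra zify.
Set Implicit Arguments. Unset Strict Implicit. Unset Printing Implicit Defensive.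
Import GRing.Theory.

Section Scan.
Variables (A : Type) (m : nat) (F : Type) (f : seq A -> gate m F -> A).

Definition scan (C : seq (gate m F)) := foldl (fun vs g => rcons vs (f vs g)) [::] C.

Lemma scan_rcons C g : scan (rcons C g) = rcons (scan C) (f (scan C) g).
Proof. by rewrite /scan foldl_rcons. Qed.

Lemma size_scan C : size (scan C) = size C.
Proof. by elim/last_ind: C => [|C g IH] //; rewrite scan_rcons !size_rcons IH. Qed.

Lemma nth_scan a0 g0 C i : i < size C ->
  nth a0 (scan C) i = f (take i (scan C)) (nth g0 C i).
Proof.
elim/last_ind: C => [|C g IH] //; rewrite size_rcons ltnS leq_eqVlt scan_rcons.
case/orP=> [/eqP-> | lt_iC].
  by rewrite !nth_rcons size_scan ltnn eqxx -cats1 -(size_scan C) take_size_cat.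
by rewrite !nth_rcons size_scan lt_iC IH // -cats1 takel_cat // size_scan ltnW.
Qed.

Hypothesis f_local : forall vs i g,
  (forall j, j \in children g -> j < i) -> f (take i vs) g = f vs g.

Lemma nth_scan_wf a0 C i : wf_circuit C -> i < size C ->
  nth a0 (scan C) i = f (scan C) (nth (GAdd [::] : gate m F) C i).
Proof. by move=> [_ wfC] ltiC; rewrite (nth_scan _ (GAdd [::]) ltiC) f_local //; apply: wfC. Qed.

End Scan.

Section CircuitSemantics.
Variables (m : nat) (F : fieldType).

Lemma eval_gate_take vs i (g : gate m F) :
  (forall j, j \in children g -> j < i) -> eval_gate (take i vs) g = eval_gate vs g.
Proof.
by case: g => //= cs lt_cs_i; congr foldr; apply/eq_in_map => j /lt_cs_i lt_ji; rewrite nth_take.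
Qed.

Lemma nth_evals C i : wf_circuit C -> i < size C ->
  nth (nc0 F) (evals C) i = eval_gate (evals C) (nth (GAdd [::] : gate m F) C i).
Proof. exact: (nth_scan_wf eval_gate_take). Qed.

Lemma output_nth C : output C = nth (@nc0 m F) (evals C) (size C).-1.
Proof. by rewrite /output -nth_last (size_scan (@eval_gate m F)). Qed.

End CircuitSemantics.

Section CircuitShapes.
Variables (m : nat) (F : Type).

Lemma shapes_gate_take ss i (g : gate m F) :
  (forall j, j \in children g -> j < i) -> shapes_gate (take i ss) g = shapes_gate ss g.
Proof.
case: g => //= cs lt_cs_i; [congr flatten | congr map; congr choices];
  by apply/eq_in_map => j /lt_cs_i lt_ji; rewrite nth_take.
Qed.

Lemma nth_all_shapes C i : wf_circuit C -> i < size C ->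
  nth [::] (all_shapes C) i = shapes_gate (all_shapes C) (nth (GAdd [::] : gate m F) C i).
Proof. exact: (nth_scan_wf shapes_gate_take). Qed.

Lemma parse_shapes_nth (C : seq (gate m F)) : parse_shapes C = nth [::] (all_shapes C) (size C).-1.
Proof. by rewrite /parse_shapes -nth_last (size_scan (@shapes_gate m F)). Qed.

Lemma in_shapes_var ss i s : List.In s (shapes_gate ss (GVar i : gate m F)) -> s = SLeaf.
Proof. by case. Qed.

Lemma in_shapes_add ss cs s : List.In s (shapes_gate ss (GAdd cs : gate m F)) ->
  exists j s', [/\ List.In j cs, List.In s' (nth [::] ss j) & s = SAdd s'].
Proof.
move=> /List.in_concat [_ [/List.in_map_iff [j [<- in_j]]]].
by move=> /List.in_map_iff [s' [<- in_s']]; exists j, s'.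
Qed.

Lemma in_shapes_mul3 ss j1 j2 j3 s :
  List.In s (shapes_gate ss (GMul [:: j1; j2; j3] : gate m F)) ->
  exists s1 s2 s3, [/\ s = SMul [:: s1; s2; s3], List.In s1 (nth [::] ss j1),
                       List.In s2 (nth [::] ss j2) & List.In s3 (nth [::] ss j3)].
Proof.
move=> /List.in_map_iff [l [<- /List.in_concat [L [/List.in_map_iff [s1 [<- in1]]]]]].
move=> /List.in_map_iff [t [<- /List.in_concat [L2 [/List.in_map_iff [s2 [<- in2]]]]]].
move=> /List.in_map_iff [t2 [<- /List.in_concat [L3 [/List.in_map_iff [s3 [<- in3]]]]]].
by case=> [<-|[]]; exists s1, s2, s3.
Qed.

End CircuitShapes.

Section NCPolyHomogeneous.
Variables (m : nat) (F : fieldType).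
Local Open Scope ring_scope.
Implicit Types (p q : ncpoly m F) (n : nat) (w : seq 'I_m).

Definition homog p n := forall w, size w != n -> p w = 0.

Lemma homog_ncvar i : homog (ncvar F i) 1.
Proof. by move=> w; rewrite /ncvar; case: (w =P [:: i]) => [->|]. Qed.

Lemma homog_nc1 : homog (@nc1 m F) 0.
Proof. by case. Qed.

Lemma ncmul_homogl p q n w : homog p n ->
  ncmul p q w = if (n <= size w)%N then p (take n w) * q (drop n w) else 0.
Proof.
move=> hom_p; rewrite /ncmul; case: leqP => [le_nw | lt_wn].
  rewrite (bigD1 (Ordinal (le_nw : (n < (size w).+1)%N))) //= big1 ?addr0 // => i ne_in.
  rewrite hom_p ?mul0r // size_takel; last by rewrite -ltnS.
  by apply: contra ne_in => /eqP eq_in; apply/eqP/val_inj.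
rewrite big1 // => i _; rewrite hom_p ?mul0r // size_take.
by case: ifP => _; apply/eqP; have := ltn_ord i; lia.
Qed.

Lemma homog_ncmul p q n1 n2 : homog p n1 -> homog q n2 -> homog (ncmul p q) (n1 + n2).
Proof.
move=> hom_p hom_q w ne_w; rewrite (ncmul_homogl _ _ hom_p); case: ifP => // le_n1w.
by rewrite hom_q ?mulr0 // size_drop; apply/eqP; move/eqP: ne_w; lia.
Qed.

Lemma ncmulr1 p : ncmul p (@nc1 m F) =1 p.
Proof.
move=> w; rewrite /ncmul big_ord_recr /= take_size drop_size mulr1 big1 ?add0r // => i _.
rewrite /nc1; case: (drop i w) (size_drop i w) => [|? ?] /=; last by rewrite mulr0.
by have := ltn_ord i; lia.
Qed.

Lemma eq_ncmul p1 p2 q1 q2 : p1 =1 p2 -> q1 =1 q2 -> ncmul p1 q1 =1 ncmul p2 q2.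
Proof. by move=> eq_p eq_q w; apply: eq_bigr => i _; rewrite eq_p eq_q. Qed.

Lemma ncmul3_cat p q i l x r : homog p (size l) ->
  ncmul p (ncmul (ncvar F i) (ncmul q (@nc1 m F))) (l ++ x :: r) =
  p l * ncvar F i [:: x] * q r.
Proof.
move=> hom_p; rewrite (ncmul_homogl _ _ hom_p) size_cat leq_addr take_size_cat //.
by rewrite drop_size_cat // (ncmul_homogl _ _ (homog_ncvar i)) /= drop0 take0 ncmulr1 mulrA.
Qed.

Lemma eval_GAdd vs cs w :
  eval_gate vs (GAdd cs) w = \sum_(j <- cs) nth (@nc0 m F) vs j w.
Proof. by rewrite /=; elim: cs => [|j cs IH]; rewrite ?big_nil ?big_cons //= /ncadd IH. Qed.

End NCPolyHomogeneous.

Definition shift_edge (o : nat) (e : nat * nat * nat) : nat * nat * nat :=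
  let: (u, v, w) := e in (o + u, o + v, o + w).

(* [tedges] is defined under the ring-scope [+]; restate its unfolding with [addn]. *)
Lemma tedgesS d o : tedges d.+1 o =
  (o + tsize d, o + troot d, o + tsize d + 1 + troot d)
    :: tedges d o ++ tedges d (o + tsize d + 1).
Proof. by []. Qed.

Lemma tedges_shift d o : tedges d o = map (shift_edge o) (tedges d 0).
Proof.
elim: d o => [|d IH] o //; rewrite !tedgesS /= !add0n map_cat IH (IH (tsize d + 1)) -map_comp.
congr (_ :: _ ++ _); first by rewrite !addnA.
by rewrite IH; apply: eq_map => -[[u v] w] /=; rewrite !addnA.
Qed.

Lemma troot_lt d : troot d < tsize d.
Proof. by case: d => //= d; lia. Qed.

Definition edge_below (n : nat) (e : nat * nat * nat) : bool :=
  let: (u, v, w) := e in [&& u < n, v < n & w < n].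

Lemma tedges_below d : all (edge_below (tsize d)) (tedges d 0).
Proof.
elim: d => [|d IH] //; rewrite tedgesS (tedges_shift d (0 + tsize d + 1)) !add0n /= all_cat all_map.
have := troot_lt d => lt_rd; apply/and3P; split; first by apply/and3P; split; lia.
  by apply: sub_all IH => -[[u v] w] /= /and3P [? ? ?]; apply/and3P; split; lia.
by apply: sub_all IH => -[[u v] w] /= /and3P [? ? ?]; apply/and3P; split; lia.
Qed.

Section LegalColourings.
Variable m : nat.

Definition edge_legal (s : seq nat) (e : nat * nat * nat) : bool :=
  let: (u, v, w) := e in nth 0 s u == (nth 0 s v + nth 0 s w) %% m.

Definition legal_seq d (s : seq nat) : bool := all (edge_legal s) (tedges d 0).

Lemma legalE d (g : (tsize d).-tuple 'I_m) : legal g = legal_seq d (map val g).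
Proof. by []. Qed.

Lemma legal_seqS d l y r : size l = tsize d ->
  legal_seq d.+1 (l ++ y :: r) =
  [&& y == (nth 0 l (troot d) + nth 0 r (troot d)) %% m, legal_seq d l & legal_seq d r].
Proof.
move=> size_l; rewrite /legal_seq tedgesS /= (tedges_shift d (0 + tsize d + 1)) !add0n.
rewrite all_cat all_map.
have nth_left u : u < tsize d -> nth 0 (l ++ y :: r) u = nth 0 l u.
  by move=> lt_ud; rewrite nth_cat size_l lt_ud.
have nth_right u : nth 0 (l ++ y :: r) (tsize d + 1 + u) = nth 0 r u.
  by rewrite nth_cat size_l ifN; [have -> : tsize d + 1 + u - tsize d = u.+1 by lia | lia].
rewrite nth_cat size_l ltnn subnn nth_left ?troot_lt // nth_right; congr [&& _, _ & _].
  apply: eq_in_all => -[[u v] w] /(allP (tedges_below d)) /= /and3P [? ? ?].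
  by rewrite !nth_left.
by apply: eq_all => -[[u v] w] /=; rewrite !nth_right.
Qed.

End LegalColourings.

Section Colours.
Variable m0 : nat.
Local Notation m := m0.+1.

(* [x : 'I_m] stands for the variable x_(x+1), of colour (x + 1) mod m. *)
Definition col (x : 'I_m) : nat := x.+1 %% m.
Definition var_of (c : nat) : 'I_m := inord (colvar m c).
Definition subm (c a : nat) : nat := (c + m - a) %% m.

Lemma col_lt x : col x < m.
Proof. exact: ltn_pmod. Qed.

Lemma colK x : colvar m (col x) = x.
Proof.
rewrite /col /colvar; case: (ltngtP x.+1 m) (ltn_ord x) => // [lt_x1m | eq_x1m] _.
  by rewrite modn_small.
have -> : x.+1 %% m = 0 by rewrite eq_x1m modnn.
by move: eq_x1m => /= [->].
Qed.

Lemma colvarK c : c < m -> (colvar m c).+1 %% m = c.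
Proof.
rewrite /colvar; case: eqP => [->|ne_c0] lt_cm; first by rewrite modnn.
by rewrite prednK ?modn_small //; lia.
Qed.

Lemma col_var_of c : c < m -> col (var_of c) = c.
Proof.
by move=> lt_cm; rewrite /col /var_of inordK ?colvarK // /colvar; case: eqP => _ //=; lia.
Qed.

Lemma eq_var_of c x : c < m -> (x == var_of c) = (col x == c).
Proof.
move=> lt_cm; apply/eqP/eqP => [->|<-]; first exact: col_var_of.
by rewrite /var_of colK inord_val.
Qed.

Lemma eq_subm a b c : a < m -> b < m -> c < m -> (b == subm c a) = (c == (a + b) %% m).
Proof.
move=> lt_am lt_bm lt_cm; rewrite /subm.
have mod_small2 x : x < m + m -> x %% m = if x < m then x else x - m.
  move=> lt_x; case: ifP => [|/negbT]; first exact: modn_small.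
  by rewrite -leqNgt => le_mx; rewrite -{1}(subnK le_mx) modnDr modn_small //; lia.
by rewrite !mod_small2; try lia; case: ifP; case: ifP; move=> *; apply/eqP/eqP; lia.
Qed.

Lemma map_colvar_eq (g w : seq 'I_m) :
  (map (colvar m) (map val g) == map val w) = (map val g == map col w).
Proof.
apply/eqP/eqP => [eq_gw | ->]; last by rewrite -map_comp; apply/eq_map => x /=; rewrite colK.
have := congr1 (map (fun c => (c.+1 %% m)%N)) eq_gw; rewrite -!map_comp => <-.
by apply: eq_map => x /=; rewrite colvarK.
Qed.
End Colours.
Arguments col {m0} x.

Lemma split_middle (T : Type) (n : nat) (w : seq T) : size w = n + 1 + n ->
  exists l x r, [/\ w = l ++ x :: r, size l = n & size r = n].
Proof.
move=> size_w; case def_r: (drop n w) (size_drop n w) => [|x r] /=; rewrite size_w => size_r.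
  by lia.
exists (take n w), x, r; rewrite -def_r cat_take_drop size_takel ?size_w //; last by lia.
by split=> //; lia.
Qed.

Section RootColouredWords.
Variables (F : fieldType) (m0 : nat).
Local Notation m := m0.+1.
Implicit Types (w l r : seq 'I_m).

Definition rootcol k w : nat := nth 0 (map col w) (troot k).
Definition legal_word k w : bool := (size w == tsize k) && legal_seq m k (map col w).

Local Open Scope ring_scope.

Definition Proot k c : ncpoly m F := fun w => (legal_word k w && (rootcol k w == c))%:R.

Lemma rootcol_lt k w : (rootcol k w < m)%N.
Proof.
rewrite /rootcol; case: (ltnP (troot k) (size w)) => [lt_rw | le_wr].
  by rewrite (nth_map ord0) ?col_lt.
by rewrite nth_default ?size_map.
Qed.

Lemma homog_Proot k c : homog (Proot k c) (tsize k).
Proof. by move=> w /negbTE ne_w; rewrite /Proot /legal_word ne_w. Qed.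

Lemma Proot0 c : (c < m)%N -> Proot 0 c =1 ncvar F (var_of m0 c).
Proof.
move=> lt_cm [|x [|y w]] //=; rewrite /Proot /ncvar /legal_word /rootcol /=.
  by rewrite eqseq_cons andbT eq_var_of //; case: eqP.
by rewrite eqseq_cons andbF.
Qed.

Lemma sum_Proot k w (f : nat -> F) :
  \sum_(a < m) Proot k a w * f a = (legal_word k w)%:R * f (rootcol k w).
Proof.
rewrite (bigD1 (Ordinal (rootcol_lt k w))) //= big1 => [|a ne_a].
  by rewrite /Proot eqxx andbT addr0.
rewrite /Proot; case: eqP => [eq_a|]; last by rewrite andbF mul0r.
by case/eqP: ne_a; apply: val_inj.
Qed.

Lemma legal_wordS k l x r : size l = tsize k -> size r = tsize k ->
  legal_word k.+1 (l ++ x :: r) =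
  [&& col x == ((rootcol k l + rootcol k r) %% m)%N, legal_word k l & legal_word k r].
Proof.
move=> size_l size_r; rewrite /legal_word map_cat map_cons legal_seqS ?size_map //.
by rewrite size_cat /= size_l size_r -addnn addnS !eqxx.
Qed.

Lemma rootcolS k l x r : size l = tsize k -> rootcol k.+1 (l ++ x :: r) = col x.
Proof. by move=> size_l; rewrite /rootcol map_cat nth_cat size_map size_l ltnn subnn. Qed.

Lemma ProotS k c : (c < m)%N ->
  Proot k.+1 c =1 fun w => \sum_(a < m)
    ncmul (Proot k a)
      (ncmul (ncvar F (var_of m0 c)) (ncmul (Proot k (subm m0 c a)) (@nc1 m F))) w.
Proof.
move=> lt_cm w; have [size_w | ne_w] := eqVneq (size w) (tsize k.+1); last first.
  rewrite (@homog_Proot k.+1 c w ne_w) big1 // => a _.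
  have ne_w' : size w != (tsize k + (1 + (tsize k + 0)))%N.
    by rewrite addn0 addnA addn1 addSn addnn.
  exact: (homog_ncmul (@homog_Proot k a)
    (homog_ncmul (homog_ncvar F _) (homog_ncmul (@homog_Proot k _) (@homog_nc1 m F))) ne_w').
have size_w' : size w = (tsize k + 1 + tsize k)%N by rewrite size_w /= -addnn addn1 addSn.
have [l [x [r [-> size_l size_r]]]] := split_middle size_w'.
have hom_l a : homog (Proot k a) (size l) by rewrite size_l; exact: (@homog_Proot k a).
under eq_bigr => a _ do rewrite (ncmul3_cat _ _ _ _ (hom_l a)) -mulrA.
(* only the root colour of [l] contributes to the sum *)
rewrite (sum_Proot k l (fun a => ncvar F _ [:: x] * Proot k (subm m0 c a) r)).
rewrite /Proot /ncvar legal_wordS // rootcolS // eqseq_cons andbT eq_var_of //.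
case: (col x =P c) => [<- | _]; last by rewrite andbF mul0r mulr0.
rewrite eq_subm ?rootcol_lt ?col_lt // mul1r -natrM mulnb andbT.
by case: (legal_word k l); case: (legal_word k r); case: (_ == _).
Qed.

Lemma sum_Proot_legal k w : \sum_(c < m) Proot k c w = (legal_word k w)%:R.
Proof. by rewrite -(eq_bigr _ (fun c _ => mulr1 _)) (sum_Proot k w (fun=> 1)) mulr1. Qed.

Lemma Pd_legal_word d w : @Pd F m d w = (legal_word d w)%:R.
Proof.
rewrite /Pd; congr (_%:R); have [lw | nlw] := boolP (legal_word d w); last first.
  apply: eq_card0 => g; rewrite !inE map_colvar_eq legalE.
  apply: contraNF nlw => /andP [lg /eqP eq_g].
  by rewrite /legal_word -eq_g lg -(size_map col) -eq_g !size_map size_tuple eqxx.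
have size_t : size (map (fun x => inord (col x) : 'I_m) w) == tsize d.
  by rewrite size_map; case/andP: lw.
have val_t : map val (Tuple size_t) = map col w.
  by rewrite /= -map_comp; apply: eq_map => x /=; rewrite inordK ?col_lt.
rewrite [RHS]/= -(cards1 (Tuple size_t)); apply: eq_card => g; rewrite !inE map_colvar_eq legalE.
apply/andP/eqP => [[_ /eqP eq_g] | ->]; last by rewrite val_t eqxx; case/andP: lw.
by apply: val_inj; apply: (inj_map val_inj); rewrite eq_g val_t.
Qed.

End RootColouredWords.

Lemma big_iota0 (R : Type) (idx : R) (op : R -> R -> R) n (h : nat -> R) :
  \big[op/idx]_(a <- iota 0 n) h a = \big[op/idx]_(a < n) h a.
Proof. by rewrite -(big_mkord xpredT) /index_iota subn0. Qed.

Lemma in_map_iota0 (T : Type) (f : nat -> T) y n :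
  List.In y (map f (iota 0 n)) -> exists2 a, a < n & y = f a.
Proof. by move=> /List.in_map_iff [a [<- /List.in_seq lt_a]]; exists a => //; lia. Qed.

Lemma sum_nat_blocks (h : nat -> nat) a k n :
  \sum_(a <= i < a + k * n) h i = \sum_(j < k) \sum_(0 <= r < n) h (a + j * n + r).
Proof.
elim: k => [|k IH]; first by rewrite mul0n addn0 big_geq // big_ord0.
rewrite big_ord_recr -IH /= mulSnr addnA (@big_cat_nat _ _ _ (a + k * n)) ?leq_addr //=.
congr (_ + _); rewrite -{1}[a + k * n]add0n big_addn addKn.
by apply: eq_bigr => r _; rewrite addnC.
Qed.

Section TreeCircuit.
Variables (F : fieldType) (m0 d : nat).
Local Notation m := m0.+1.

(* Gates [0, m) are the variables.  Level [k < d] is the block of [level_size] gates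
   starting at [m + k * level_size]: the product Q_k(a) x_c Q_k(c - a) at offset
   [c * m + a], then the sum over [a] of these at offset [m * m + c].  Hence
   Q_k(c) = [Proot k c] sits at [Qidx k c], and the last gate adds up the Q_d(c). *)
Definition level_size := m * m + m.
Definition Qidx k c := k * level_size + c.
Definition prod_idx k c a := m + k * level_size + (c * m + a).

Definition level_gate k r : gate m F :=
  if r < m * m then GMul [:: Qidx k (r %% m); r %/ m; Qidx k (subm m0 (r %/ m) (r %% m))]
  else GAdd [seq prod_idx k (r - m * m) a | a <- iota 0 m].

Definition gate_at i : gate m F :=
  if i < m then GVar (var_of m0 i)
  else if (i - m) %/ level_size < d then level_gate ((i - m) %/ level_size) ((i - m) %% level_size)
  else GAdd [seq Qidx d c | c <- iota 0 m].

Definition tree_circuit := mkseq gate_at (Qidx d m).+1.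

Lemma level_size_gt0 : 0 < level_size.
Proof. by rewrite addn_gt0 orbT. Qed.

Lemma gate_at_level k r : k < d -> r < level_size ->
  gate_at (m + k * level_size + r) = level_gate k r.
Proof.
move=> lt_kd lt_r; rewrite /gate_at ltnNge -addnA leq_addr /= addKn.
by rewrite divnMDl ?level_size_gt0 // modnMDl divn_small // modn_small // addn0 lt_kd.
Qed.

Lemma gate_at_prod k c a : k < d -> c < m -> a < m ->
  gate_at (prod_idx k c a) = GMul [:: Qidx k a; c; Qidx k (subm m0 c a)].
Proof.
move=> lt_kd lt_cm lt_am; have lt_r : c * m + a < m * m by nia.
rewrite /prod_idx gate_at_level //; last by rewrite /level_size; lia.
by rewrite /level_gate lt_r divnMDl // modnMDl divn_small // modn_small // addn0.
Qed.

Lemma gate_at_sum k c : k < d -> c < m ->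
  gate_at (Qidx k.+1 c) = GAdd [seq prod_idx k c a | a <- iota 0 m].
Proof.
move=> lt_kd lt_cm; have -> : Qidx k.+1 c = m + k * level_size + (m * m + c).
  by rewrite /Qidx /level_size; lia.
rewrite gate_at_level //; last by rewrite /level_size; lia.
by rewrite /level_gate ltnNge leq_addr addKn.
Qed.

Lemma gate_at_var c : c < m -> gate_at c = GVar (var_of m0 c).
Proof. by rewrite /gate_at => ->. Qed.

Lemma gate_at_top : gate_at (Qidx d m) = GAdd [seq Qidx d c | c <- iota 0 m].
Proof.
rewrite /gate_at /Qidx ltnNge leq_addl /= addnK mulnK ?level_size_gt0 //.
by rewrite ltnn.
Qed.

Lemma children_level_gate k r j : r < level_size ->
  j \in children (level_gate k r) -> j < m + k * level_size + r.
Proof.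
rewrite /level_gate => lt_r; case: ltnP => [lt_r2 | le_r2].
  have lt_mod := ltn_pmod r (ltn0Sn m0).
  have lt_sub := ltn_pmod (r %/ m + m - r %% m) (ltn0Sn m0).
  have le_div := leq_div r m.
  by rewrite /subm /Qidx !inE => /or3P [] /eqP ->; lia.
move=> /mapP [a]; rewrite mem_iota /prod_idx => /andP [_ lt_am] ->.
by move: lt_r; rewrite /level_size; nia.
Qed.

Lemma children_gate_at i j : j \in children (gate_at i) -> j < i.
Proof.
rewrite /gate_at; case: ltnP => // le_mi.
have def_i : i = m + (i - m) %/ level_size * level_size + (i - m) %% level_size.
  by have := divn_eq (i - m) level_size; lia.
case: ltnP => [_ | le_di].
  by rewrite [X in _ < X]def_i; apply: children_level_gate; rewrite ltn_pmod ?level_size_gt0.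
move/mapP=> [c]; rewrite mem_iota /Qidx => /andP [_ lt_cm] ->.
by move: le_di; rewrite leq_divRL ?level_size_gt0 //; lia.
Qed.

Lemma wf_tree_circuit : wf_circuit tree_circuit.
Proof.
split=> [|i]; first by rewrite /tree_circuit /mkseq.
by rewrite size_mkseq => lt_i j; rewrite nth_mkseq //; apply: children_gate_at.
Qed.

Lemma size_tree_circuit : size tree_circuit = (Qidx d m).+1.
Proof. exact: size_mkseq. Qed.

Lemma leq_Qidx k c : k <= d -> c <= m -> Qidx k c <= Qidx d m.
Proof. by move=> le_kd le_cm; rewrite leq_add ?leq_mul2r ?le_kd ?orbT. Qed.

Lemma lt_prod_idx k c a : c < m -> a < m -> prod_idx k c a < Qidx k.+1 0.
Proof. by rewrite /prod_idx /Qidx /level_size; nia. Qed.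

Local Notation vals := (evals tree_circuit).

Lemma nth_vals i : i <= Qidx d m -> nth (@nc0 m F) vals i = eval_gate vals (gate_at i).
Proof.
by move=> le_i; rewrite nth_evals ?size_tree_circuit ?nth_mkseq //; apply: wf_tree_circuit.
Qed.

Lemma vals_Qidx k c : k <= d -> c < m -> nth (@nc0 m F) vals (Qidx k c) =1 @Proot F m0 k c.
Proof.
elim: k c => [|k IH] c le_kd lt_cm w.
  rewrite nth_vals; last exact: leq_Qidx (ltnW lt_cm).
  by rewrite (_ : Qidx 0 c = c) ?gate_at_var ?Proot0.
rewrite nth_vals; last exact: leq_Qidx (ltnW lt_cm).
rewrite (gate_at_sum le_kd lt_cm) eval_GAdd big_map big_iota0 (ProotS _ _ lt_cm).
apply: eq_bigr => a _; have lt_am := ltn_ord a; have lt_sm : subm m0 c a < m by exact: ltn_pmod.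
have le_prod : prod_idx k c a <= Qidx d m.
  by apply: ltnW (leq_trans (lt_prod_idx _ _ _) (leq_Qidx _ _)).
rewrite (nth_vals le_prod) (gate_at_prod le_kd lt_cm lt_am) /=.
apply: eq_ncmul => [u | ]; first exact: IH (ltnW le_kd) lt_am u.
apply: eq_ncmul => [u | ]; last by apply: eq_ncmul => [u|//]; apply: IH (ltnW le_kd) lt_sm u.
by rewrite nth_vals ?(gate_at_var lt_cm); last exact: (leq_Qidx (leq0n d) (ltnW lt_cm)).
Qed.

Lemma output_tree_circuit w : output tree_circuit w = @Pd F m d w.
Proof.
rewrite output_nth size_tree_circuit -pred_Sn (nth_vals (leqnn _)) gate_at_top eval_GAdd.
rewrite big_map big_iota0.
by rewrite Pd_legal_word -sum_Proot_legal; apply: eq_bigr => c _; rewrite vals_Qidx.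
Qed.

Fixpoint shape_tree k : shape :=
  if k is k'.+1 then SAdd (SMul [:: shape_tree k'; SLeaf; shape_tree k']) else SLeaf.

Local Notation shapes := (all_shapes tree_circuit).

Lemma nth_shapes i : i <= Qidx d m -> nth [::] shapes i = shapes_gate shapes (gate_at i).
Proof.
by move=> le_i; rewrite nth_all_shapes ?size_tree_circuit ?nth_mkseq //; apply: wf_tree_circuit.
Qed.

Lemma shapes_Qidx k c s : k <= d -> c < m ->
  List.In s (nth [::] shapes (Qidx k c)) -> s = shape_tree k.
Proof.
elim: k c s => [|k IH] c s le_kd lt_cm.
  rewrite nth_shapes; last exact: leq_Qidx (ltnW lt_cm).
  by rewrite (_ : Qidx 0 c = c) ?gate_at_var //; apply: in_shapes_var.
rewrite nth_shapes; last exact: leq_Qidx (ltnW lt_cm).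
rewrite (gate_at_sum le_kd lt_cm) => /in_shapes_add [j [s' [in_j + ->]]].
have [a lt_am ->] := in_map_iota0 in_j.
have lt_sm : subm m0 c a < m by exact: ltn_pmod.
have le_prod : prod_idx k c a <= Qidx d m.
  by apply: ltnW (leq_trans (lt_prod_idx _ _ _) (leq_Qidx _ _)).
rewrite (nth_shapes le_prod) (gate_at_prod le_kd lt_cm lt_am).
move=> /in_shapes_mul3 [s1 [s2 [s3 [-> in1 in2 in3]]]].
rewrite (IH _ _ (ltnW le_kd) lt_am in1) (IH _ _ (ltnW le_kd) lt_sm in3).
move: in2; rewrite nth_shapes; last exact: (leq_Qidx (leq0n d) (ltnW lt_cm)).
by rewrite (gate_at_var lt_cm) => /in_shapes_var ->.
Qed.

Lemma UPT_tree_circuit : UPT tree_circuit.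
Proof.
suff top_shape s : List.In s (parse_shapes tree_circuit) -> s = SAdd (shape_tree d).
  by move=> s t /top_shape -> /top_shape ->.
rewrite parse_shapes_nth size_tree_circuit -pred_Sn (nth_shapes (leqnn _)) gate_at_top.
move=> /in_shapes_add [j [s' [in_j + ->]]].
have [c lt_cm ->] := in_map_iota0 in_j.
move=> in_s'.
by rewrite (shapes_Qidx (leqnn d) lt_cm in_s').
Qed.

Local Notation fan_in i := (size (children (gate_at i))).

Lemma fan_in_level k r : k < d -> r < level_size ->
  fan_in (m + k * level_size + r) = if r < m * m then 3 else m.
Proof.
move=> lt_kd lt_r; rewrite gate_at_level // /level_gate.
by case: ifP => //= _; rewrite size_map size_iota.
Qed.

Lemma wires_level k : k < d ->
  \sum_(0 <= r < level_size) fan_in (m + k * level_size + r) = 4 * (m * m).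
Proof.
move=> lt_kd; rewrite (@big_cat_nat _ _ _ (m * m)) ?leq_addr //=.
rewrite (@eq_big_nat _ _ _ 0 (m * m) _ (fun=> 3)); last first.
  by move=> r /andP [_ lt_r]; rewrite fan_in_level ?lt_r // /level_size; lia.
rewrite (@eq_big_nat _ _ _ (m * m) level_size _ (fun=> m)); last first.
  by move=> r /andP [le_r lt_r]; rewrite fan_in_level // ltnNge le_r.
by rewrite !sum_nat_const_nat /level_size; lia.
Qed.

Lemma wires_tree_circuit :
  sumn [seq size (children g) | g <- tree_circuit] = d * (4 * (m * m)) + m.
Proof.
rewrite /tree_circuit /mkseq -map_comp sumnE big_map.
rewrite (_ : iota 0 _ = index_iota 0 (m + d * level_size).+1); last first.
  by rewrite /index_iota subn0 /Qidx addnC.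
rewrite (@big_cat_nat _ _ _ m) ?leq0n //= 1?ltnW ?ltnS ?leq_addr //.
rewrite big1_seq => [|i /andP [_]]; last by rewrite mem_index_iota /= => /gate_at_var ->.
rewrite add0n big_nat_recr ?leq_addr //= sum_nat_blocks.
rewrite (eq_bigr (fun=> 4 * (m * m))) => [|k _]; last exact: wires_level.
rewrite sum_nat_const card_ord mulnC; congr (_ + _).
by rewrite (_ : m + d * level_size = Qidx d m) ?gate_at_top /= ?size_map ?size_iota // /Qidx addnC.
Qed.

Lemma csize_tree_circuit : 0 < d -> csize tree_circuit <= 10 * (m ^ 2 * d).
Proof.
rewrite /csize size_tree_circuit wires_tree_circuit /Qidx /level_size => d_gt0; nia.
Qed.

End TreeCircuit.

Theorem lemma4p1 (F : fieldType) :
  exists K : nat, forall m d : nat, (0 < m)%N -> (0 < d)%N ->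
    exists C : seq (gate m F),
      wf_circuit C /\
      (forall w, output C w = @Pd F m d w) /\
      UPT C /\
      (csize C <= K * (m ^ 2 * d))%N.
Proof.
exists 10 => -[//|m0] d _ d_gt0; exists (tree_circuit F m0 d).
split; first exact: wf_tree_circuit.
split; first exact: output_tree_circuit.
by split; [exact: UPT_tree_circuit | exact: csize_tree_circuit].
Qed.
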